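(* Let $G$ be a connected graph on $n$ vertices and $m$ edges. If all the cycles of $G$ are pairwise vertex disjoint, then $G\in\mathcal{P}_n$.
   Context: Graphs are finite, simple and undirected. $\mathbb{T}=\{z\in\mathbb{C}:|z|=1\}$, $\mathbb{I}=[0,2\pi)$. A $\mathbb{T}$-gain on $G$ is a map $\varphi$ from oriented edges to $\mathbb{T}$ with $\varphi(\overrightarrow{e_{ts}})=\varphi(\overrightarrow{e_{st}})^{-1}$; $A(\Phi)$ for $\Phi=(G,\varphi)$ is the Hermitian matrix with $(s,t)$ entry $\varphi(\overrightarrow{e_{st}})$ if $v_s\sim v_t$, else $0$; $\mathcal{T}_G$ is the set of all $\mathbb{T}$-gain graphs on $G$. For a complex matrix $A=B+iC$ with $B,C$ real, $\Re(A)=B$, and $\Re(A)\ge0$ means all entries of $B$ are nonnegative. The gain of a directed cycle is the product of gains of its oriented edges. A rooted spanning tree $T$ with root $v_r$ induces the tree order ($v_x\le v_y$ iff $v_x$ is on the $T$-path from $v_r$ to $v_y$); $T$ is normal if adjacent vertices of $G$ are always comparable. The suitably oriented graph $\overrightarrow{G_T}$ orients each edge $e_{st}$ with $v_s\le v_t$ as $\overrightarrow{e_{st}}$ if $e_{st}\in E(T)$ and as $\overrightarrow{e_{ts}}$ otherwise; the $m-n+1$ fundamental cycles of $T$ become directed cycles $\overrightarrow{C_j(T)}$. For $r=(c_1,\dots,c_{m-n+1})\in\mathbb{I}^{m-n+1}$, $\mathcal{A}_T(r)=\{(G,\varphi)\in\mathcal{T}_G:\varphi(\overrightarrow{C_j(T)})=e^{ic_j}\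 \forall j\}$. A connected graph $G$ with normal spanning tree $T$ has property GNRP if for each $r\in\mathbb{I}^{m-n+1}$ there exists $\Phi\in\mathcal{A}_T(r)$ with $\Re(A(\Phi))\ge0$. $\mathcal{P}_n$ (or $\mathcal{P}$) is the collection of connected graphs on $n$ vertices with property GNRP. *)

From HB Require Import structures.
From mathcomp Require Import all_boot all_order all_algebra.
From mathcomp Require Import complex.
From mathcomp Require Import reals trigo.
Set Implicit Arguments. Unset Strict Implicit. Unset Printing Implicit Defensive.
Import Order.TTheory GRing.Theory Num.Theory.
Local Open Scope ring_scope.

Section GainGraphs.
Variables (R : realType) (n : nat).
Implicit Types (G : rel 'I_n).

Definition simple_graph G : Prop := symmetric G /\ irreflexive G.

Definition connected_graph G : Prop := forall x y : 'I_n, connect G x y.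

Definition graph_cycle G (c : seq 'I_n) : Prop :=
  [/\ ucycle G c & (3 <= size c)%N].

Definition cycle_edge (c : seq 'I_n) (x y : 'I_n) : bool :=
  (x \in c) && (y \in c) && ((y == next c x) || (x == next c y)).

(** All cycles pairwise vertex disjoint: two cycles sharing a vertex are the
    same cycle (same edge set). *)
Definition cycles_vertex_disjoint G : Prop :=
  forall c1 c2 : seq 'I_n, graph_cycle G c1 -> graph_cycle G c2 ->
    (exists v, (v \in c1) && (v \in c2)) ->
    forall x y, cycle_edge c1 x y = cycle_edge c2 x y.

(** T-gain graphs on G: phi (s,t) is the gain of the oriented edge e_st
    (only its values on adjacent pairs matter). *)
Definition T_gain G (phi : 'I_n -> 'I_n -> R[i]) : Prop :=
  forall s t, G s t -> `|phi s t| = 1 /\ phi t s = (phi s t)^-1.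

Definition gain_adj G (phi : 'I_n -> 'I_n -> R[i]) : 'M[R[i]]_n :=
  \matrix_(s, t) (if G s t then phi s t else 0).

(** Rooted spanning trees, encoded by their root rt and parent map p:
    E(T) = { {v, p v} : v <> rt }. *)
Definition rooted_spanning_tree G (rt : 'I_n) (p : 'I_n -> 'I_n) : Prop :=
  [/\ p rt = rt,
      (forall v, v != rt -> G v (p v)) &
      (forall v, rt \in traject p v n)].

(** Tree order: x <= y iff x lies on the T-path from the root to y,
    i.e. x is one of y, p y, p (p y), ... *)
Definition tree_le (p : 'I_n -> 'I_n) (x y : 'I_n) : bool := x \in traject p y n.

Definition tree_edge (p : 'I_n -> 'I_n) (s t : 'I_n) : bool :=
  (p t == s) || (p s == t).

Definition normal_tree G (p : 'I_n -> 'I_n) : Prop :=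
  forall x y, G x y -> tree_le p x y || tree_le p y x.

(** Non-tree edges e_st with v_s <= v_t: each determines the fundamental
    cycle C(T, e_st), oriented in the suitably oriented graph as the T-path
    from v_s down to v_t followed by the arc (v_t, v_s). *)
Definition fundamental (G : rel 'I_n) (p : 'I_n -> 'I_n) (s t : 'I_n) : bool :=
  [&& G s t, ~~ tree_edge p s t & tree_le p s t].

(** Gain of the directed fundamental cycle for the non-tree edge e_st:
    product of phi(p w, w) over the vertices w <> v_s on the tree path
    from v_t up to v_s, times phi(t, s). *)
Definition fund_cycle_gain (p : 'I_n -> 'I_n) (phi : 'I_n -> 'I_n -> R[i])
    (s t : 'I_n) : R[i] :=
  (\prod_(k < index s (traject p t n))
      phi (iter k.+1 p t) (iter k p t)) * phi t s.

Definition expi (c : R) : R[i] := (cos c +i* sin c)%C.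

(** Property GNRP of G with respect to the normal rooted spanning tree
    (rt, p): for each assignment r of angles in [0, 2 pi) to the fundamental
    cycles there is Phi in A_T(r) with Re(A(Phi)) >= 0. *)
Definition GNRP G (p : 'I_n -> 'I_n) : Prop :=
  forall r : 'I_n -> 'I_n -> R,
    (forall s t, fundamental G p s t -> 0 <= r s t < 2 * pi) ->
    exists phi, [/\ T_gain G phi,
      (forall s t, fundamental G p s t -> fund_cycle_gain p phi s t = expi (r s t)) &
      (forall s t, 0 <= complex.Re (gain_adj G phi s t))].

End GainGraphs.

From HB Require Import structures.
From mathcomp Require Import all_boot all_order all_algebra.
From mathcomp Require Import complex.
From mathcomp Require Import reals trigo.
From mathcomp Require Import ring lra.
Set Implicit Arguments. Unset Strict Implicit. Unset Printing Implicit Defensive.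
Import Order.TTheory GRing.Theory Num.Theory.

(* Every fundamental cycle C(T, e_st) has length L >= 3.  Shifting r_st into
   (-pi, pi] and dividing by L gives an angle theta with |theta| <= pi/3, and
   putting the gain e^(i theta) on every edge of the directed cycle gives it the
   gain e^(i r_st).  As cycles are vertex disjoint, every tree edge lies on at
   most one fundamental cycle, so these choices (gain 1 on all other edges) are
   consistent, and every gain has real part cos theta >= 0. *)

Lemma next_traject (T : eqType) (f : T -> T) x m y :
  uniq (traject f x m.+1) -> y \in traject f x m.+1 ->
  next (traject f x m.+1) y = if y == iter m f x then x else f y.
Proof.
move=> uc yc; have /trajectP [j jm yj] := yc.
have idx i : (i < m.+1)%N -> index (iter i f x) (traject f x m.+1) = i.
  by move=> im; rewrite -(nth_traject f im) index_uniq ?size_traject.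
rewrite next_nth yc yj idx // [traject _ _ _.+1]/=.
have [->|jm'] := eqVneq j m; first by rewrite eqxx nth_default ?size_traject.
have ltjm : (j < m)%N by rewrite ltn_neqAle jm' -ltnS.
have -> : (iter j f x == iter m f x) = false.
  by apply: contraNF jm' => /eqP e; rewrite -(idx j) // e idx.
by rewrite (set_nth_default (f x)) ?size_traject // nth_traject // -iterSr iterS.
Qed.

Section RootedTree.
Variables (n : nat) (G : rel 'I_n) (rt : 'I_n) (p : 'I_n -> 'I_n).
Hypothesis sG : simple_graph G.
Hypothesis rst : rooted_spanning_tree G rt p.

Lemma iter_root k : iter k p rt = rt.
Proof. by case: rst => prt _ _; elim: k => //= k ->. Qed.

Lemma periodic_root y m : (0 < m)%N -> iter m p y = y -> y = rt.
Proof.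
move=> m_gt0 periodic; case: rst => _ _ /(_ y) /trajectP [k _ yk].
have iter_mul j : iter (m * j) p y = y.
  by elim: j => [|j IH]; rewrite ?muln0 // mulnS iterD IH periodic.
by rewrite -(iter_mul k) -(subnK (leq_pmull k m_gt0)) iterD -yk iter_root.
Qed.

Lemma tree_le_anti x y : tree_le p x y -> tree_le p y x -> x = y.
Proof.
move=> /trajectP [[|i] _ ->] // /trajectP [j _ yj].
have y_rt : y = rt.
  by apply: (periodic_root (m := j + i.+1)); [rewrite addnS | rewrite iterD -yj].
by rewrite y_rt iter_root.
Qed.

Lemma parent_swap a b : p a = b -> p b = a -> a = b.
Proof.
move=> ab ba; have root x : p (p x) = x -> x = rt by exact: (periodic_root (m := 2)).
have a_rt : a = rt by apply: root; rewrite ab ba.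
have b_rt : b = rt by apply: root; rewrite ba ab.
by rewrite a_rt b_rt.
Qed.

Lemma fundamental_asym s t : fundamental G p s t -> ~~ fundamental G p t s.
Proof.
case/and3P => Gst _ st; apply/negP => /and3P [_ _ ts].
by move: Gst; rewrite (tree_le_anti st ts); case: sG => _ ->.
Qed.

Lemma tree_path m x : rt \notin traject p x m -> path G x (traject p (p x) m).
Proof.
elim: m x => [|m IH] x //=; rewrite inE negb_or eq_sym => /andP [x_rt /IH ->].
by case: rst => _ /(_ x x_rt) ->.
Qed.

Definition tree_dist (s t : 'I_n) : nat := index s (traject p t n).
Definition fund_path (s t : 'I_n) : seq 'I_n := traject p t (tree_dist s t).
Definition fund_cycle (s t : 'I_n) : seq 'I_n := traject p t (tree_dist s t).+1.

Section Fundamental.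
Variables s t : 'I_n.
Hypothesis F : fundamental G p s t.

Lemma tree_dist_lt : (tree_dist s t < n)%N.
Proof.
case/and3P: F => _ _ st.
by rewrite /tree_dist -[X in (_ < X)%N](size_traject p t n) index_mem.
Qed.

Lemma iter_tree_dist : iter (tree_dist s t) p t = s.
Proof. by case/and3P: F => _ _ st; rewrite -(nth_traject p tree_dist_lt) nth_index. Qed.

Lemma fund_cycle_rcons : fund_cycle s t = rcons (fund_path s t) s.
Proof. by rewrite /fund_cycle trajectSr iter_tree_dist. Qed.

Lemma notin_fund_path : s \notin fund_path s t.
Proof.
case/and3P: F => _ _ st.
by rewrite /fund_path -(take_traject _ _ (ltnW tree_dist_lt)) in_take // ltnn.
Qed.

Lemma root_notin_fund_path : rt \notin fund_path s t.
Proof.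
apply: contra notin_fund_path => /trajectP [k k_lt rtk].
rewrite /fund_path; apply/trajectP; exists k => //.
by rewrite -rtk -{1}iter_tree_dist -(subnK (ltnW k_lt)) iterD -rtk iter_root.
Qed.

Lemma fund_cycle_uniq : uniq (fund_cycle s t).
Proof. by rewrite /fund_cycle looping_uniq /looping iter_tree_dist notin_fund_path. Qed.

Lemma tree_dist_ge2 : (2 <= tree_dist s t)%N.
Proof.
case/and3P: F => Gst not_tree _; have := iter_tree_dist.
case: tree_dist => [|[|k]] //= ts.
- by move: Gst; rewrite -ts; case: sG => _ ->.
- by move: not_tree; rewrite /tree_edge ts eqxx.
Qed.

Lemma fund_cycle_graph_cycle : graph_cycle G (fund_cycle s t).
Proof.
split; last by rewrite size_traject ltnS tree_dist_ge2.
rewrite /ucycle fund_cycle_uniq andbT (cycle_path t) /fund_cycle /= last_traject.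
by rewrite iter_tree_dist; case/and3P: F => -> _ _; apply/tree_path/root_notin_fund_path.
Qed.

Lemma next_fund_cycle x : x \in fund_cycle s t ->
  next (fund_cycle s t) x = if x == s then t else p x.
Proof. by move/(next_traject fund_cycle_uniq); rewrite iter_tree_dist. Qed.

Lemma fund_cycle_edge x y : cycle_edge (fund_cycle s t) x y ->
  [|| tree_edge p x y, (x == s) && (y == t) | (x == t) && (y == s)].
Proof.
case/andP => /andP [xc yc]; rewrite !next_fund_cycle // /tree_edge.
case/orP => /eqP ->; [have [->|_] := eqVneq x s | have [->|_] := eqVneq y s];
  by rewrite ?eqxx ?orbT.
Qed.

End Fundamental.

Lemma fund_path_disjoint s t s' t' w : cycles_vertex_disjoint G ->
  fundamental G p s t -> fundamental G p s' t' ->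
  w \in fund_path s t -> w \in fund_path s' t' -> (s, t) = (s', t').
Proof.
move=> cvd F F' w1 w2.
have mem_cycle u v : fundamental G p u v -> w \in fund_path u v -> w \in fund_cycle u v.
  by move=> Fuv wuv; rewrite fund_cycle_rcons // mem_rcons inE wuv orbT.
have st_edge : cycle_edge (fund_cycle s' t') s t.
  rewrite -(cvd _ _ (fund_cycle_graph_cycle F) (fund_cycle_graph_cycle F')); last first.
    by exists w; rewrite !mem_cycle.
  have s_in : s \in fund_cycle s t by rewrite fund_cycle_rcons // mem_rcons mem_head.
  by rewrite /cycle_edge next_fund_cycle // s_in mem_head !eqxx.
case/or3P: (fund_cycle_edge F' st_edge) => [| /andP [/eqP -> /eqP ->] // |].
- by case/and3P: F => _ /negP.
- case/andP => /eqP st' /eqP ts'.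
  by move: F; rewrite st' ts' (negbTE (fundamental_asym F')).
Qed.
End RootedTree.

Local Open Scope ring_scope.

Section Expi.
Variable R : realType.
Implicit Types x y : R.

Lemma expiD x y : expi (x + y) = expi x * expi y.
Proof. by rewrite /expi cosD sinD /=; congr (_ +i* _)%C; ring. Qed.

Lemma expi0 : expi (0 : R) = 1.
Proof. by rewrite /expi cos0 sin0. Qed.

Lemma expiN x : expi (- x) = (expi x)^-1.
Proof. by apply/esym/mulr1_eq; rewrite -expiD subrr expi0. Qed.

Lemma norm_expi x : `|expi x| = 1.
Proof. by rewrite normc_def /= cos2Dsin2 sqrtr1. Qed.

Lemma expiMn x m : expi x ^+ m = expi (x *+ m).
Proof. by elim: m => [|m IH]; rewrite ?expi0 // exprS IH mulrS expiD. Qed.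

Lemma expiB2pi x : expi (x - 2 * pi) = expi x.
Proof.
by rewrite /expi -(cosD2pi (x - 2 * pi)) -(sinD2pi (x - 2 * pi)) mulr_natl subrK.
Qed.

End Expi.

Section CycleAngle.
Variable R : realType.

Definition cycle_angle (c : R) (L : nat) : R :=
  (if c <= pi then c else c - 2 * pi) / L%:R.

Lemma cycle_angle_bound c L : 0 <= c < 2 * pi -> (2 <= L)%N ->
  `|cycle_angle c L| <= pi / 2.
Proof.
move=> /andP [c_ge0 c_lt] L_ge2; have pi_gt0 := pi_gt0 R.
have L2 : 2 <= L%:R :> R by rewrite (ler_nat R 2).
have c'_le : `|if c <= pi then c else c - 2 * pi| <= pi.
  by rewrite ler_norml; case: (leP c pi) => c_pi; apply/andP; split; lra.
rewrite /cycle_angle normrM normfV normr_nat ler_pdivrMr; last by lra.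
apply: (le_trans c'_le); nra.
Qed.

Lemma expi_cycle_angle c L : (0 < L)%N -> expi (cycle_angle c L *+ L) = expi c.
Proof.
move=> L_gt0; rewrite /cycle_angle -[_ *+ L]mulr_natr divfK ?pnatr_eq0 -?lt0n //.
by case: ifP => _; rewrite ?expiB2pi.
Qed.

End CycleAngle.

Section GainAssignment.
Variables (R : realType) (n : nat) (G : rel 'I_n) (rt : 'I_n) (p : 'I_n -> 'I_n).
Variable r : 'I_n -> 'I_n -> R.
Hypothesis sG : simple_graph G.
Hypothesis rst : rooted_spanning_tree G rt p.
Hypothesis cvd : cycles_vertex_disjoint G.
Hypothesis r_range : forall s t, fundamental G p s t -> 0 <= r s t < 2 * pi.

Definition fund_angle (s t : 'I_n) : R := cycle_angle (r s t) (tree_dist p s t).+1.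

Definition tree_angle (w : 'I_n) : R :=
  if [pick st | fundamental G p st.1 st.2 && (w \in fund_path p st.1 st.2)] is Some st
  then fund_angle st.1 st.2 else 0.

Definition edge_angle (x y : 'I_n) : R :=
  if p y == x then tree_angle y else if p x == y then - tree_angle x
  else if fundamental G p y x then fund_angle y x
  else if fundamental G p x y then - fund_angle x y else 0.

Lemma fund_angle_bound s t : fundamental G p s t -> `|fund_angle s t| <= pi / 2.
Proof.
move=> F; apply: cycle_angle_bound; first exact: r_range.
exact: leqW (tree_dist_ge2 sG F).
Qed.

Lemma tree_angle_fund s t w : fundamental G p s t -> w \in fund_path p s t ->
  tree_angle w = fund_angle s t.
Proof.
rewrite /tree_angle => F w_in; case: pickP => [[s' t'] /andP [F' w_in'] | none].
  by case: (fund_path_disjoint sG rst cvd F' F w_in' w_in) => -> ->.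
by have := none (s, t); rewrite F w_in.
Qed.

Lemma tree_angle_bound w : `|tree_angle w| <= pi / 2.
Proof.
rewrite /tree_angle; case: pickP => [[s t] /andP [F _] | _].
  exact: fund_angle_bound.
by rewrite normr0 divr_ge0 ?pi_ge0.
Qed.

Lemma edge_angle_bound x y : `|edge_angle x y| <= pi / 2.
Proof.
rewrite /edge_angle; case: ifP => _; first exact: tree_angle_bound.
case: ifP => _; first by rewrite normrN tree_angle_bound.
case: ifP => [F|_]; first exact: fund_angle_bound.
case: ifP => [F|_]; first by rewrite normrN fund_angle_bound.
by rewrite normr0 divr_ge0 ?pi_ge0.
Qed.

Lemma edge_angle_anti x y : G x y -> edge_angle y x = - edge_angle x y.
Proof.
move=> Gxy; rewrite /edge_angle.
have [yx|_] := eqVneq (p y) x.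
  have [xy|_] := eqVneq (p x) y; last by [].
  by move: Gxy; rewrite (parent_swap rst xy yx); case: sG => _ ->.
have [_|_] := eqVneq (p x) y; first by rewrite opprK.
case: (boolP (fundamental G p y x)) => [Fyx|_].
  by rewrite (negbTE (fundamental_asym sG rst Fyx)).
by case: ifP; rewrite ?opprK ?oppr0.
Qed.

Lemma edge_angle_parent w : edge_angle (p w) w = tree_angle w.
Proof. by rewrite /edge_angle eqxx. Qed.

Lemma edge_angle_fund s t : fundamental G p s t -> edge_angle t s = fund_angle s t.
Proof.
move=> /[dup] F /and3P [_ not_tree _]; move: not_tree.
by rewrite /edge_angle /tree_edge negb_or => /andP [/negbTE -> /negbTE ->]; rewrite F.
Qed.

End GainAssignment.

Theorem theorem4p1 (R : realType) (n : nat) (G : rel 'I_n) :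
  simple_graph G -> connected_graph G -> cycles_vertex_disjoint G ->
  forall (rt : 'I_n) (p : 'I_n -> 'I_n),
    rooted_spanning_tree G rt p -> normal_tree G p -> GNRP R G p.
Proof.
move=> sG _ cvd rt p rst _ r r_range.
exists (fun x y => expi (edge_angle G p r x y)); split.
- move=> x y Gxy; split; first exact: norm_expi.
  by rewrite (edge_angle_anti r sG rst Gxy) expiN.
- move=> s t F; rewrite /fund_cycle_gain -/(tree_dist p s t) (edge_angle_fund r F).
  have on_path (k : 'I_(tree_dist p s t)) : iter k p t \in fund_path p s t.
    by apply/trajectP; exists k.
  under eq_bigr => k _ do
    rewrite iterS edge_angle_parent (tree_angle_fund r sG rst cvd F (on_path k)).
  by rewrite prodr_const card_ord -exprSr expiMn expi_cycle_angle.
- move=> x y; rewrite mxE; case: ifP => // _.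
  by apply: cos_ge0_pihalf; rewrite -ler_norml edge_angle_bound.
Qed.
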